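(* There is a positive absolute constant $k$ such that for every integer $c\ge 3$, $$G_c^{2/\varphi(c)}>k\,c.$$
   Context: For a positive integer $n$, $R(n)$ denotes the product of the distinct primes dividing $n$. $\varphi$ is Euler's totient function. For $c\ge3$, $G_c$ is the product of $R(abc)$ over all pairs of positive integers $(a,b)$ with $a+b=c$, $a<b$, $\gcd(a,b)=1$ (there are $\varphi(c)/2$ such pairs), so $G_c^{2/\varphi(c)}$ is the geometric mean of these radicals. *)

From mathcomp Require Import all_boot.
From Stdlib Require Import Reals.

Definition rad (n : nat) : nat := \prod_(p <- primes n) p.

(* G_c: product of rad(a*b*c) over pairs (a,b) of positive integers with
   a + b = c, a < b, gcd(a,b) = 1. We index by a, with b = c - a. *)
Definition G (c : nat) : nat :=
  \prod_(0 <= a < c | (0 < a) && (a < c - a) && coprime a (c - a))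
     rad (a * (c - a) * c).

From Stdlib Require Import Reals Lra.
From mathcomp Require Import all_boot zify.

Set Implicit Arguments.
Unset Strict Implicit.
Unset Printing Implicit Defensive.

(* Pairing a with c - a gives G_c^2 = R(c)^phi(c) * P^2, where P is the product of
   the R(a) over the a < c coprime to c.  The product of these a is at least
   phi(c)! >= (phi(c)/3)^phi(c), and it exceeds P by at most the product of the
   a / R(a) over a <= c, which is prod_p p^(e_p) with p (p - 1) e_p <= c; as
   sum_p ln p / (p (p - 1)) <= 2, this is at most 9^c.  Hence
   G_c^(2/phi) >= phi^2 R(c) / (9 * 81^(c/phi)).  Finally phi R(c) = c prod_(p|c) (p - 1),
   while c/phi <= omega(c) + 1 and prod_(p|c) (p - 1) >= omega(c)!, which absorbs
   81^(omega(c) + 1) up to a constant factor. *)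

Lemma rad_gt0 n : 0 < rad n.
Proof.
rewrite /rad big_seq; apply: prodn_cond_gt0 => p.
by rewrite mem_primes => /andP[/prime_gt0].
Qed.

Lemma radM m n : 0 < m -> 0 < n -> coprime m n -> rad (m * n) = rad m * rad n.
Proof.
move=> m0 n0 cmn; rewrite /rad -big_cat; apply/perm_big/uniq_perm => [||p].
- exact: primes_uniq.
- rewrite cat_uniq !primes_uniq andbT /=; apply/hasPn => p.
  rewrite !mem_primes => /and3P[pp _ pn]; apply/negP => /and3P[_ _ pm].
  have : p %| gcdn m n by rewrite dvdn_gcd pm pn.
  by rewrite (eqP cmn) dvdn1 => /eqP p1; rewrite p1 in pp.
- by rewrite mem_cat primesM.
Qed.

Lemma rad_widen N n : 0 < n <= N ->
  rad n = \prod_(0 <= p < N.+1 | p \in primes n) p.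
Proof.
move=> /andP[n0 nN]; rewrite /rad -[RHS]big_filter.
apply/perm_big/uniq_perm => [||p]; rewrite ?filter_uniq ?iota_uniq ?primes_uniq //.
rewrite mem_filter mem_index_iota; case: (boolP (p \in primes n)) => //= pn.
by move: pn; rewrite mem_primes => /and3P[_ _ /(dvdn_leq n0)]; lia.
Qed.

Definition rad_cofactor N n := \prod_(0 <= p < N.+1 | prime p) p ^ (logn p n).-1.

Lemma rad_cofactor_gt0 N n : 0 < rad_cofactor N n.
Proof. by apply: prodn_cond_gt0 => p /prime_gt0 p0; rewrite expn_gt0 p0. Qed.

Lemma rad_cofactorE N n : 0 < n <= N -> rad n * rad_cofactor N n = n.
Proof.
move=> /andP[n0 nN]; rewrite (@rad_widen N n) ?n0 // /rad_cofactor.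
rewrite -{3}(partnT n0) (widen_partn _ nN) (big_mkcond (fun p => p \in primes n)).
rewrite [in X in _ * X]big_mkcond [RHS]big_mkcond -big_split /=.
apply: eq_bigr => p _; case: (boolP (prime p)) => [pp|np]; last first.
  by rewrite mem_primes (negPf np) /= /logn (negPf np).
by rewrite -[_ \in _]logn_gt0; case: (logn p n) => // l; rewrite -expnS.
Qed.

Definition logn_excess p N := \sum_(0 <= a < N.+1) (logn p a).-1.

Lemma lognS_div p n : prime p ->
  logn p n.+1 = if p %| n.+1 then (logn p (n.+1 %/ p)).+1 else 0.
Proof. by move=> pp; rewrite lognE pp. Qed.

Lemma logn_excessE p N : prime p -> logn_excess p N = logn p (N %/ p)`!.
Proof.
move=> pp; elim: N => [|N IH]; first by rewrite /logn_excess big_nat1 logn0 div0n logn1.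
rewrite /logn_excess big_nat_recr //= -/(logn_excess p N) IH lognS_div //.
rewrite divnS ?prime_gt0 //; case: ifP => pN; last by rewrite addn0 add0n.
by rewrite pN add1n factS lognM ?fact_gt0 // addnC.
Qed.

Lemma logn_fact_rec p M : prime p -> logn p M`! = M %/ p + logn p (M %/ p)`!.
Proof.
move=> pp; elim: M => [|M IH]; first by rewrite div0n.
rewrite factS lognM ?fact_gt0 // IH lognS_div // divnS ?prime_gt0 //.
case: ifP => pM; last by rewrite !add0n.
by rewrite pM add1n factS lognM ?fact_gt0 //; lia.
Qed.

Lemma logn_fact_le p M : prime p -> (p - 1) * logn p M`! <= M.
Proof.
move=> pp; elim/ltn_ind: M => M IH.
have [->|M0] := posnP M; first by rewrite logn1 muln0.
rewrite logn_fact_rec //; have := IH _ (ltn_Pdiv (prime_gt1 pp) M0).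
have := leq_divM M p; have := prime_gt0 pp; nia.
Qed.

Lemma logn_excess_le p N : prime p -> p * (p - 1) * logn_excess p N <= N.
Proof.
move=> pp; rewrite logn_excessE //; have := logn_fact_le (N %/ p) pp.
have := leq_divM N p; have := prime_gt0 pp; nia.
Qed.

Lemma prod_rad_cofactor N :
  \prod_(0 <= a < N.+1) rad_cofactor N a =
  \prod_(0 <= p < N.+1 | prime p) p ^ logn_excess p N.
Proof. by rewrite exchange_big; apply: eq_bigr => p _; rewrite expn_sum. Qed.

Section RealEstimates.

Local Open Scope R_scope.

Lemma INR_muln m n : INR (m * n)%N = INR m * INR n.
Proof. by rewrite -multE mult_INR. Qed.

Lemma INR_expn m n : INR (m ^ n)%N = INR m ^ n.
Proof. by elim: n => [|n IH]; rewrite ?expn0 // expnS INR_muln IH. Qed.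

Lemma INR_leq m n : (m <= n)%N -> INR m <= INR n.
Proof. by move/leP; apply: le_INR. Qed.

Lemma INR_gt0 n : (0 < n)%N -> 0 < INR n.
Proof. by move/ltP; apply: lt_0_INR. Qed.

Lemma exp_le x y : x <= y -> exp x <= exp y.
Proof. by case=> [/exp_increasing/Rlt_le | ->]; last apply: Rle_refl. Qed.

Lemma ln_le x y : 0 < x -> x <= y -> ln x <= ln y.
Proof. by move=> x0 [/(ln_increasing _ _ x0)/Rlt_le | ->]; last apply: Rle_refl. Qed.

Lemma ln_ge0 x : 1 <= x -> 0 <= ln x.
Proof. by move=> x1; rewrite -ln_1; apply: ln_le; lra. Qed.

Lemma exp_pow x n : exp x ^ n = exp (INR n * x).
Proof.
elim: n => [|n IH]; first by rewrite Rmult_0_l exp_0.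
by rewrite S_INR /= IH -exp_plus; congr exp; ring.
Qed.

Lemma ln_succ_le x : 0 < x -> ln (x + 1) <= ln x + / x.
Proof.
move=> x0; have ix0 : 0 < / x by apply: Rinv_0_lt_compat.
have -> : x + 1 = x * (1 + / x) by field; lra.
rewrite ln_mult; try lra.
suff : ln (1 + / x) <= / x by lra.
by rewrite -{2}(ln_exp (/ x)); apply: ln_le; [lra | apply: exp_ineq1_le].
Qed.

(* [(2 + ln x) / x] decreases fast enough to telescope [sum_p ln p / (p (p - 1))]. *)
Lemma telescope_step x : 1 <= x ->
  ln (x + 1) / ((x + 1) * x) <= (2 + ln x) / x - (2 + ln (x + 1)) / (x + 1).
Proof.
move=> x1; have x0 : 0 < x by lra.
have le2 : (x + 1) * (ln (x + 1) - ln x) <= 2.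
  have : (x + 1) * (ln (x + 1) - ln x) <= (x + 1) * / x.
    by apply: Rmult_le_compat_l; have := ln_succ_le x0; lra.
  have : / x <= 1 by rewrite -Rinv_1; apply: Rinv_le_contravar; lra.
  have -> : (x + 1) * / x = 1 + / x by field; lra.
  lra.
have -> : (2 + ln x) / x - (2 + ln (x + 1)) / (x + 1) =
    ln (x + 1) / ((x + 1) * x) + (2 - (x + 1) * (ln (x + 1) - ln x)) / ((x + 1) * x).
  by field; lra.
suff : 0 <= (2 - (x + 1) * (ln (x + 1) - ln x)) / ((x + 1) * x) by lra.
by apply: Rmult_le_pos; [lra | apply/Rlt_le/Rinv_0_lt_compat; nra].
Qed.

Lemma ln_prod_prime_pow_le N (e : nat -> nat) M :
  (forall p, prime p -> (p * (p - 1) * e p <= N)%N) -> (0 < M)%N ->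
  ln (INR (\prod_(0 <= p < M.+1 | prime p) p ^ e p)) <=
  INR N * (2 - (2 + ln (INR M)) / INR M).
Proof.
move=> eN; elim: M => [//|M IH] _.
have [->|M0] := posnP M.
  by rewrite big_nat_cond big1 ?ln_1 => [|[|[|]]] //=; lra.
rewrite (@big_cat_nat _ _ _ M.+1) // [X in INR X]/=.
rewrite [X in (_ * X)%N]big_mkcond big_nat1 INR_muln.
rewrite ln_mult; last 2 first.
- by apply/INR_gt0/prodn_cond_gt0 => p /prime_gt0 p0; rewrite expn_gt0 p0.
- by apply: INR_gt0; case: ifP => // _; rewrite expn_gt0.
have {IH} := IH M0; rewrite S_INR.
set x := INR M; have x1 : 1 <= x by apply: (@INR_leq 1).
suff : ln (INR (if prime M.+1 then M.+1 ^ e M.+1 else 1)%N) <=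
    INR N * (ln (x + 1) / ((x + 1) * x)).
  have := telescope_step x1; have := pos_INR N; nra.
have q0 : 0 <= ln (x + 1) / ((x + 1) * x).
  by apply: Rmult_le_pos; [apply: ln_ge0 | apply/Rlt_le/Rinv_0_lt_compat]; nra.
case: ifP => pM; last by rewrite ln_1; apply: Rmult_le_pos => //; apply: pos_INR.
rewrite INR_expn S_INR ln_pow; last by have := pos_INR M; lra.
have := INR_leq (eN _ pM); rewrite !INR_muln S_INR subn1 /= -/x => eMN.
have -> : INR (e M.+1) * ln (x + 1) =
    (x + 1) * x * INR (e M.+1) * (ln (x + 1) / ((x + 1) * x)) by field; nra.
exact: Rmult_le_compat_r.
Qed.

Lemma prod_prime_pow_excess_le N :
  (\prod_(0 <= p < N.+1 | prime p) p ^ logn_excess p N <= 9 ^ N)%N.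
Proof.
have [->|N0] := posnP N; first by rewrite big_nat_cond big1 => [|[|]].
set T := (\prod_(_ <= p < _ | _) _)%N.
have T0 : 0 < INR T.
  by apply/INR_gt0/prodn_cond_gt0 => p /prime_gt0 p0; rewrite expn_gt0 p0.
have lnT : ln (INR T) <= INR N * 2.
  have := ln_prod_prime_pow_le (logn_excess_le^~ N) N0.
  have : 0 <= (2 + ln (INR N)) / INR N.
    apply: Rmult_le_pos; first by have := ln_ge0 (INR_leq N0); lra.
    exact/Rlt_le/Rinv_0_lt_compat/INR_gt0.
  have := pos_INR N; rewrite -/T; nra.
apply/leP/INR_le; rewrite INR_expn.
apply: Rle_trans (_ : exp (INR N * 2) <= _).
  by rewrite -(exp_ln _ T0); apply: exp_le.
rewrite -exp_pow; apply: pow_incr; split; first exact/Rlt_le/exp_pos.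
have -> : 2 = 1 + 1 by ring.
rewrite exp_plus; have := exp_le_3; have := exp_pos 1; simpl INR; nra.
Qed.

Lemma succn_expn_le n : (n.+1 ^ n <= 3 * n ^ n)%N.
Proof.
case: n => [//|n]; apply/leP/INR_le; rewrite INR_muln !INR_expn.
set x := INR n.+1; have x0 : 0 < x by apply: INR_gt0.
have -> : INR n.+2 = x * (1 + / x) by rewrite S_INR -/x; field; lra.
rewrite Rpow_mult_distr Rmult_comm; apply: Rmult_le_compat_r; first by apply: pow_le; lra.
apply: Rle_trans (_ : exp (/ x) ^ n.+1 <= _).
  apply: pow_incr; split; last exact: exp_ineq1_le.
  by have := Rinv_0_lt_compat _ x0; lra.
rewrite exp_pow -/x Rinv_r; last lra.
by have := exp_le_3; rewrite (INR_IZR_INZ 3) /=.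
Qed.

Lemma expnn_le_fact n : (n ^ n <= 3 ^ n * n`!)%N.
Proof.
elim: n => [//|n IH]; rewrite factS !expnS.
have := succn_expn_le n; have := leq_mul (leqnn n.+1) IH; nia.
Qed.

Lemma Rpower_root_ge x y n : 0 < x -> 0 < y -> (0 < n)%N ->
  y ^ n <= x ^ 2 -> y <= Rpower x (2 / INR n).
Proof.
move=> x0 y0 n0 yx; have n0R := INR_gt0 n0.
rewrite -[y]Rpower_1 // -(Rinv_r (INR n)); last lra.
rewrite /Rdiv -!Rpower_mult (Rpower_pow _ _ y0) -[2]/(INR 2) (Rpower_pow _ _ x0).
apply: Rle_Rpower_l; first exact/Rlt_le/Rinv_0_lt_compat.
by split; first exact: pow_lt.
Qed.

End RealEstimates.

Lemma fact_le_prod_sorted m s : sorted ltn s -> all (fun x => m < x) s ->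
  (m + size s)`! <= m`! * \prod_(x <- s) x.
Proof.
elim: s m => [|x s IH] m /=; first by rewrite addn0 big_nil muln1.
move=> xs /andP[mx _]; rewrite big_cons addnS -addSn.
have xs_gt : all (fun y => m.+1 < y) s.
  by apply: sub_all (order_path_min ltn_trans xs) => y; apply: leq_ltn_trans.
apply: leq_trans (IH _ (path_sorted xs) xs_gt) _.
by rewrite mulnA leq_mul2r factS mulnC leq_mul2l mx !orbT.
Qed.

Lemma prod_sorted_le_prod_pred m s : sorted ltn s -> all (fun x => m < x) s ->
  m * \prod_(x <- s) x <= (m + size s) * \prod_(x <- s) x.-1.
Proof.
elim: s m => [|x s IH] m /=; first by rewrite addn0 !big_nil.
move=> xs /andP[mx _]; rewrite !big_cons addnS -addSn.
have xs_gt : all (fun y => m.+1 < y) s.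
  by apply: sub_all (order_path_min ltn_trans xs) => y; apply: leq_ltn_trans.
have := IH _ (path_sorted xs) xs_gt; case: x mx {xs xs_gt} => // x mx /= IHm.
have := leq_mul (leqnn x) IHm; nia.
Qed.

Lemma fact_size_primes_le_rad n : (size (primes n)).+1`! <= rad n.
Proof.
rewrite -add1n -[rad n]mul1n; apply: fact_le_prod_sorted; first exact: sorted_primes.
by apply/allP => p; rewrite mem_primes => /andP[/prime_gt1].
Qed.

Lemma rad_le_prod_pred n :
  rad n <= (size (primes n)).+1 * \prod_(p <- primes n) p.-1.
Proof.
rewrite -add1n -[rad n]mul1n; apply: prod_sorted_le_prod_pred; first exact: sorted_primes.
by apply/allP => p; rewrite mem_primes => /andP[/prime_gt1].
Qed.

Lemma totient_mul_rad n : 0 < n ->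
  totient n * rad n = n * \prod_(p <- primes n) p.-1.
Proof.
move=> n0; rewrite totientE // /rad [X in _ = X * _](prod_prime_decomp n0).
rewrite prime_decompE big_map -!big_split /=; apply: eq_big_seq => p.
rewrite -logn_gt0; case: (logn p n) => [|l] // _.
by rewrite /= expnS mulnAC [RHS]mulnC mulnA.
Qed.

Lemma leq_totient_size_primes n : 0 < n -> n <= totient n * (size (primes n)).+1.
Proof.
move=> n0; have y0 : 0 < \prod_(p <- primes n) p.-1.
  rewrite big_seq; apply: prodn_cond_gt0 => p.
  by rewrite mem_primes => /andP[/prime_gt1]; case: p.
rewrite -(leq_pmul2r y0) -totient_mul_rad // -mulnA leq_mul2l.
by rewrite rad_le_prod_pred orbT.
Qed.

Lemma fact_size_primes_le_prod_pred n :
  (size (primes n))`! <= \prod_(p <- primes n) p.-1.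
Proof.
rewrite -(@leq_pmul2l (size (primes n)).+1) // -factS.
exact: leq_trans (fact_size_primes_le_rad n) (rad_le_prod_pred n).
Qed.

Lemma expn_le_fact A m : A ^ m <= A ^ A * m`!.
Proof.
elim: m => [|m IH]; first by rewrite expn0 muln1 expn_gt0; case: A.
have [mA|Am] := ltnP m A.
  apply: leq_trans (leq_pmulr _ (fact_gt0 _)).
  by case: A mA {IH} => // A mA; rewrite leq_pexp2l.
by rewrite expnS factS mulnCA leq_mul // leqW.
Qed.

Lemma expn_le_totient b E n : (forall m, b ^ m <= E * m`!) -> 0 < n ->
  b ^ n <= (b * E * \prod_(p <- primes n) p.-1) ^ totient n.
Proof.
move=> bE n0; have [->|b0] := posnP b; first by rewrite exp0n.
set k := size (primes n); apply: leq_trans (_ : (b ^ k.+1) ^ totient n <= _).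
  by rewrite -expnM mulnC leq_pexp2l // leq_totient_size_primes.
rewrite leq_exp2r ?totient_gt0 // expnS -mulnA leq_mul2l; apply/orP; right.
exact: leq_trans (bE k) (leq_mul (leqnn E) (fact_size_primes_le_prod_pred n)).
Qed.

Definition prod_coprime c F := \prod_(0 <= a < c | coprime a c) F a.

Lemma coprime_subr a c : a <= c -> coprime a (c - a) = coprime a c.
Proof. by move=> ac; rewrite /coprime -{2}(subnK ac) gcdnDr. Qed.

Lemma coprime_subl a c : a <= c -> coprime (c - a) c = coprime a c.
Proof.
by move=> ac; rewrite -coprime_subr ?leq_subr // subKn // coprime_sym coprime_subr.
Qed.

Lemma coprime0n_gt1 c : 1 < c -> coprime 0 c = false.
Proof. by rewrite /coprime gcd0n => /gtn_eqF. Qed.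

Lemma prod_coprime_rev c (P : pred nat) F : 1 < c ->
  \prod_(0 <= a < c | coprime a c && P a) F a =
  \prod_(0 <= a < c | coprime a c && P (c - a)) F (c - a).
Proof.
move=> c1; rewrite !(big_ltn_cond (ltnW c1)) coprime0n_gt1 //= big_nat_rev.
rewrite big_mkcond [RHS]big_mkcond.
apply: eq_big_nat => a /andP[a0 ac]; have -> : 1 + c - a.+1 = c - a by lia.
by rewrite coprime_subl // ltnW.
Qed.

Lemma count_coprime c : count (coprime^~ c) (index_iota 0 c) = totient c.
Proof.
rewrite totient_count_coprime -sum1_count big_mkcond /=.
by apply: eq_bigr => a _; rewrite coprime_sym; case: coprime.
Qed.

Lemma prod_coprime_const c x : prod_coprime c (fun=> x) = x ^ totient c.
Proof. by rewrite /prod_coprime big_const_seq iter_muln_1 count_coprime. Qed.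

Lemma prod_coprime_subn c F : 1 < c ->
  prod_coprime c (fun a => F (c - a)) = prod_coprime c F.
Proof.
move=> c1; have := prod_coprime_rev (fun=> true) F c1.
by rewrite /prod_coprime !(eq_bigl _ _ (fun a => andbT _)) => ->.
Qed.

Lemma coprime_neq_subn a c : 2 < c -> coprime a c -> a != c - a.
Proof.
move=> c2 ac; apply/eqP => a_eq; have c_eq : c = a + a by lia.
by move: ac; rewrite c_eq /coprime gcdnDl gcdnn => /eqP a1; lia.
Qed.

Lemma rad_abc a c : 0 < a < c -> coprime a c ->
  rad (a * (c - a) * c) = rad a * rad (c - a) * rad c.
Proof.
move=> /andP[a0 ac] cop; have ca0 : 0 < c - a by rewrite subn_gt0.
rewrite radM ?muln_gt0 ?a0 ?ca0 ?radM ?coprime_subr ?(ltnW ac) //; first lia.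
by rewrite coprimeMl cop coprime_subl // ltnW.
Qed.

Section PairProduct.

Variable c : nat.
Hypothesis c_gt2 : 2 < c.

Let H a := rad a * rad (c - a) * rad c.

Let c_gt1 : 1 < c. Proof. exact: ltnW. Qed.

Lemma G_coprimeE : G c = \prod_(0 <= a < c | coprime a c && (a < c - a)) H a.
Proof.
apply: eq_big => [a | a /andP[/andP[a0 a_lt] cop]].
  have [->|a0] := posnP a; first by rewrite (coprime0n_gt1 c_gt1).
  have [ac|ca] := leqP a c; first by rewrite coprime_subr // andbC.
  by rewrite (_ : c - a = 0) ?ltn0 ?andbF //; lia.
have ac : a <= c by lia.
rewrite rad_abc //; last by rewrite -coprime_subr.
by rewrite a0; lia.
Qed.

Lemma prod_coprime_pairs : \prod_(0 <= a < c | coprime a c) H a = G c ^ 2.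
Proof.
rewrite (bigID (fun a => a < c - a)) /= -G_coprimeE; congr (_ * _).
rewrite prod_coprime_rev // G_coprimeE big_mkcond [RHS]big_mkcond.
apply: eq_big_nat => a /andP[_ ac]; rewrite subKn ?(ltnW ac) //.
case: (boolP (coprime a c)) => //= cop.
have := coprime_neq_subn c_gt2 cop; rewrite /H subKn ?(ltnW ac) //.
by case: ltngtP => //= _ _; rewrite [rad (c - a) * _]mulnC.
Qed.

Lemma G_sqr : G c ^ 2 = rad c ^ totient c * prod_coprime c rad ^ 2.
Proof.
rewrite -prod_coprime_pairs /H !big_split /=.
rewrite -!/(prod_coprime c _) prod_coprime_subn // prod_coprime_const.
by rewrite mulnC expnS expn1.
Qed.

End PairProduct.

Lemma fact_totient_le c : 1 < c -> (totient c)`! <= prod_coprime c id.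
Proof.
move=> c1; rewrite /prod_coprime -big_filter -count_coprime -size_filter.
rewrite -[size _]add0n -[X in _ <= X]mul1n; apply: fact_le_prod_sorted.
  exact: (sorted_filter ltn_trans _ (iota_ltn_sorted _ _)).
apply/allP => a; rewrite mem_filter lt0n => /andP[cop _].
by apply: contraTneq cop => ->; rewrite coprime0n_gt1.
Qed.

Lemma prod_coprime_le c : 1 < c -> prod_coprime c id <= prod_coprime c rad * 9 ^ c.
Proof.
move=> c1; have -> : prod_coprime c id =
    prod_coprime c rad * prod_coprime c (rad_cofactor c).
  rewrite /prod_coprime -big_split big_nat_cond [RHS]big_nat_cond /=.
  apply: eq_bigr => a /andP[ac cop].
  have [a0|a0] := posnP a; first by rewrite a0 coprime0n_gt1 in cop.
  by rewrite rad_cofactorE // a0 ltnW.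
rewrite leq_mul2l; apply/orP; right; apply: leq_trans (prod_prime_pow_excess_le c).
rewrite -prod_rad_cofactor big_nat_recr //=.
rewrite (leq_trans _ (leq_pmulr _ (rad_cofactor_gt0 _ _))) //.
rewrite /prod_coprime big_mkcond leq_prod // => a _; case: ifP => // _.
exact: rad_cofactor_gt0.
Qed.

Lemma G_gt0 c : 0 < G c.
Proof. by apply: prodn_cond_gt0 => a _; apply: rad_gt0. Qed.

Lemma G_lower E c : (forall m, 81 ^ m <= E * m`!) -> 2 < c ->
  c ^ totient c <= (9 * 81 * E) ^ totient c * G c ^ 2.
Proof.
move=> E81 c2; have c1 : 1 < c := ltnW c2; have c0 : 0 < c := ltnW c1.
set n := totient c; set y := \prod_(p <- primes c) p.-1.
have n0 : 0 < n by rewrite totient_gt0.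
have y0 : 0 < y := leq_trans (fact_gt0 _) (fact_size_primes_le_prod_pred c).
have units_le : n ^ n <= 3 ^ n * (prod_coprime c rad * 9 ^ c).
  apply: leq_trans (expnn_le_fact n) _; rewrite leq_mul2l; apply/orP; right.
  exact: leq_trans (fact_totient_le c1) (prod_coprime_le c1).
have sq_le : (n * (c * y)) ^ n <= 9 ^ n * G c ^ 2 * 81 ^ c.
  rewrite -totient_mul_rad // G_sqr // -/n.
  rewrite (_ : 9 ^ n = 3 ^ n * 3 ^ n) -?expnMn // (_ : 81 ^ c = 9 ^ c * 9 ^ c) -?expnMn //.
  rewrite !expnMn -!mulnn.
  have := leq_mul (leq_mul units_le units_le) (leqnn (rad c ^ n)); lia.
rewrite -(@leq_pmul2r (y ^ n)) ?expn_gt0 ?y0 // -expnMn.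
apply: leq_trans (_ : (n * (c * y)) ^ n <= _); first by rewrite leq_exp2r // leq_pmull.
apply: leq_trans sq_le _; have := expn_le_totient E81 c0; rewrite -/n -/y.
rewrite !expnMn => h81; have := leq_mul (leqnn (9 ^ n * G c ^ 2)) h81; lia.
Qed.

Open Scope R_scope.

Theorem theorem3 :
  exists k : R, 0 < k /\
    forall c : nat, leq 3 c ->
      Rpower (INR (G c)) (2 / INR (totient c)) > k * INR c.
Proof.
have [K K0 GK] : exists2 K, (0 < K)%N &
    forall c, (2 < c)%N -> (c ^ totient c <= K ^ totient c * G c ^ 2)%N.
  exists (9 * 81 * 81 ^ 81)%N; first by rewrite muln_gt0 expn_gt0.
  by move=> c; apply: G_lower (expn_le_fact 81).
have K0R := INR_gt0 K0.
exists (/ (2 * INR K)); split; first by apply: Rinv_0_lt_compat; lra.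
move=> c c3; have c0 : (0 < c)%N by apply: leq_trans c3.
have cK0 : 0 < INR c / INR K by apply/Rdiv_lt_0_compat/K0R/INR_gt0.
apply: Rlt_le_trans (_ : INR c / INR K <= _).
  by rewrite (_ : / (2 * INR K) * INR c = INR c / INR K / 2); [lra | field; lra].
have /INR_leq := GK c c3; rewrite INR_muln !INR_expn => Gc.
apply: Rpower_root_ge => //; [exact/INR_gt0/G_gt0 | by rewrite totient_gt0 |].
apply: (Rmult_le_reg_r (INR K ^ totient c)); first exact: pow_lt.
rewrite -Rpow_mult_distr (_ : INR c / INR K * INR K = INR c); [lra | field; lra].
Qed.
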